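(* Let $\psi_{i,j}\ge 0$ for bidders $i\in[n]$ ($n\ge 2$) and types $j\in[m]$. Define $\mathcal{B}=\min_{i'}\sum_j\max_{i\ne i'}\psi_{i,j}$ and $\tilde{\mathcal{B}}=\sum_j\max_{i\ne i^*}\psi_{i,j}$, where $i^*=\arg\max_i\sum_{j\in d(i)}\psi_{i,j}$. Then $\tilde{\mathcal{B}}/2\le\mathcal{B}\le\tilde{\mathcal{B}}$.
   Context: Here $\psi_{i,j}=p_jv_{i,j}$ in a probabilistic single-item auction (type probabilities $p_j$, valuations $v_{i,j}$). For a type $j$, $w_1(j)$ is the bidder maximizing $\psi_{i,j}$ (ties broken by a fixed priority order on bidders), and $d(i)=\{j: w_1(j)=i\}$. Ties in the choice of $i^*$ are broken arbitrarily. *)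

From mathcomp Require Import all_boot all_order all_algebra.
Set Implicit Arguments. Unset Strict Implicit. Unset Printing Implicit Defensive.
Import Order.TTheory GRing.Theory Num.Theory.
Local Open Scope ring_scope.

Section Defs.
Variables (R : realFieldType) (n m : nat) (psi : 'I_n -> 'I_m -> R).

(* max_{i <> i'} psi i j ; seeded with 0, which is harmless since psi >= 0
   and (n >= 2) the range is nonempty. *)
Definition maxExcl (i' : 'I_n) (j : 'I_m) : R :=
  \big[Num.max/0]_(i < n | i != i') psi i j.

Definition Bexcl (i' : 'I_n) : R := \sum_(j < m) maxExcl i' j.

(* B = min_{i'} Bexcl i' ; the fold is seeded with Bexcl i0 for some bidder
   i0, which is itself one of the terms, so the value is the true minimum
   whatever i0 is. *)
Definition Bmin (i0 : 'I_n) : R := \big[Num.min/Bexcl i0]_(i' < n) Bexcl i'.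

Definition dset (w1 : 'I_m -> 'I_n) (i : 'I_n) : {set 'I_m} :=
  [set j | w1 j == i].

Definition dval (w1 : 'I_m -> 'I_n) (i : 'I_n) : R :=
  \sum_(j in dset w1 i) psi i j.
End Defs.

From mathcomp Require Import all_boot all_order all_algebra.
From mathcomp Require Import lra.
Import Order.TTheory GRing.Theory Num.Theory.
Set Implicit Arguments. Unset Strict Implicit. Unset Printing Implicit Defensive.
Local Open Scope ring_scope.

(* Let W = sum_j max_i psi_{i,j} be the optimal welfare. Every Bexcl i' is at
   most W, and at least W - dval i' (outside d(i') the winner of each type is
   still available) and, for i' <> istar, at least dval istar (on d(istar)
   the bidder istar is available). Adding the two lower bounds and using
   dval istar >= dval i' gives 2 Bexcl i' >= W >= Bexcl istar. *)

Section Exclusion.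
Variables (R : realFieldType) (n m : nat) (psi : 'I_n -> 'I_m -> R).

Lemma maxExcl_ge i' j i : i != i' -> psi i j <= maxExcl psi i' j.
Proof. by move=> ii'; rewrite /maxExcl (bigD1 i) //= le_max lexx. Qed.

Lemma maxExcl_le i' j x : 0 <= x -> (forall i, psi i j <= x) ->
  maxExcl psi i' j <= x.
Proof.
move=> x_ge0 psi_le; rewrite /maxExcl.
by elim/big_rec: _ => // i y _ y_le; rewrite ge_max psi_le.
Qed.

Lemma maxExcl_ge0 i' j : 0 <= maxExcl psi i' j.
Proof.
by rewrite /maxExcl; elim/big_rec: _ => // i y _ y_ge0; rewrite le_max y_ge0 orbT.
Qed.

Lemma Bexcl_ge0 i' : 0 <= Bexcl psi i'.
Proof. by apply: sumr_ge0 => j _; apply: maxExcl_ge0. Qed.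

Lemma Bmin_le i0 : Bmin psi i0 <= Bexcl psi i0.
Proof. by rewrite /Bmin (bigD1 i0) //= ge_min lexx. Qed.

Lemma Bmin_ge i0 x : (forall i', x <= Bexcl psi i') -> x <= Bmin psi i0.
Proof.
move=> x_le; rewrite /Bmin.
by elim/big_rec: _ => [|i y _ x_le_y]; rewrite ?le_min ?x_le_y x_le.
Qed.

End Exclusion.

Section Welfare.
Variables (R : realFieldType) (n m : nat) (psi : 'I_n -> 'I_m -> R).
Hypothesis psi_ge0 : forall i j, 0 <= psi i j.
Variable w1 : 'I_m -> 'I_n.
Hypothesis w1_max : forall j i, psi i j <= psi (w1 j) j.

Definition welfare : R := \sum_(j < m) psi (w1 j) j.

Lemma dvalE i : dval psi w1 i = \sum_(j < m | w1 j == i) psi (w1 j) j.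
Proof.
rewrite /dval (eq_bigl (fun j => w1 j == i)) => [|j]; last by rewrite inE.
by apply: eq_bigr => j /eqP ->.
Qed.

Lemma welfare_split i :
  welfare = dval psi w1 i + \sum_(j < m | w1 j != i) psi (w1 j) j.
Proof. by rewrite dvalE /welfare (bigID (fun j => w1 j == i)). Qed.

Lemma Bexcl_le_welfare i' : Bexcl psi i' <= welfare.
Proof.
by apply: ler_sum => j _; apply: maxExcl_le => //; apply: le_trans (w1_max j _).
Qed.

Lemma welfare_sub_dval_le_Bexcl i : welfare - dval psi w1 i <= Bexcl psi i.
Proof.
rewrite (welfare_split i) addrC addKr /Bexcl [X in _ <= X](bigID (fun j => w1 j == i)) /=.
rewrite -[X in X <= _]add0r; apply: lerD.
  by apply: sumr_ge0 => j _; apply: maxExcl_ge0.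
by apply: ler_sum => j; apply: maxExcl_ge.
Qed.

Lemma dval_le_Bexcl i i' : i != i' -> dval psi w1 i <= Bexcl psi i'.
Proof.
move=> ii'; rewrite dvalE /Bexcl [X in _ <= X](bigID (fun j => w1 j == i)) /=.
rewrite -[X in X <= _]addr0; apply: lerD.
  by apply: ler_sum => j /eqP w1j; apply: maxExcl_ge; rewrite w1j.
by apply: sumr_ge0 => j _; apply: maxExcl_ge0.
Qed.

Lemma Bexcl_half_le istar i' :
  (forall i, dval psi w1 i <= dval psi w1 istar) ->
  Bexcl psi istar / 2 <= Bexcl psi i'.
Proof.
move=> istar_max; have [<-|istar_i'] := eqVneq istar i'.
  by have := Bexcl_ge0 psi istar; lra.
have := welfare_sub_dval_le_Bexcl i'; have := dval_le_Bexcl istar_i'.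
by have := istar_max i'; have := Bexcl_le_welfare istar; lra.
Qed.

End Welfare.

Theorem claim4 (R : realFieldType) (n m : nat) (hn : (2 <= n)%N)
  (psi : 'I_n -> 'I_m -> R) (psi_ge0 : forall i j, 0 <= psi i j)
  (prio : 'I_n -> nat) (prio_inj : injective prio)
  (w1 : 'I_m -> 'I_n) (w1_max : forall j i, psi i j <= psi (w1 j) j)
  (w1_tie : forall j i, psi i j = psi (w1 j) j -> (prio (w1 j) <= prio i)%N)
  (istar : 'I_n) (istar_max : forall i, dval psi w1 i <= dval psi w1 istar) :
  Bexcl psi istar / 2 <= Bmin psi istar /\ Bmin psi istar <= Bexcl psi istar.
Proof.
split; last exact: Bmin_le.
by apply: Bmin_ge => i'; apply: (Bexcl_half_le psi_ge0 w1_max).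
Qed.
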